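(* Let $T$ be a bounded operator on $C([0,\omega_1])$ such that $T\neq\widetilde{P}_\sigma T\widetilde{P}_\sigma$ for every countable ordinal $\sigma$. Then there is $\epsilon>0$ such that for each countable ordinal $\xi$ there exists $f\in C([0,\omega_1])$ with $\operatorname{supp}(f)\subseteq(\xi,\omega_1)$, $\|f\|\le1$ and $\|Tf\|\ge\epsilon$.
   Context: $\omega_1$ is the first uncountable ordinal; $[0,\omega_1]$ has the order topology and $C([0,\omega_1])$ is the Banach space of continuous scalar-valued functions with sup norm. $\operatorname{supp}(f)=\{k: f(k)\neq0\}$. For a countable ordinal $\sigma$, $\widetilde{P}_\sigma f=f\cdot\mathbf{1}_{[0,\sigma]}+f(\omega_1)\mathbf{1}_{[\sigma+1,\omega_1]}$. *)

From Stdlib Require Import Reals.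
From Coquelicot Require Import Coquelicot.
Open Scope R_scope.

(* W (with strict order lt) models the set of countable ordinals [0, omega_1):
   a strict well-order that is uncountable and all of whose proper initial
   segments are countable.  Any such (W, lt) is order-isomorphic to omega_1. *)
Record is_omega1 (W : Type) (lt : W -> W -> bool) : Prop := {
  om_irrefl : forall x, lt x x = false;
  om_trans  : forall x y z, lt x y = true -> lt y z = true -> lt x z = true;
  om_total  : forall x y, lt x y = true \/ x = y \/ lt y x = true;
  om_wf     : well_founded (fun x y => lt x y = true);
  om_uncountable : ~ (exists g : W -> nat, forall x y, g x = g y -> x = y);
  om_segments_countable : forall x, exists g : W -> nat,
      forall y z, lt y x = true -> lt z x = true -> g y = g z -> y = z
}.

(* The compact space [0, omega_1]: Some a = countable ordinal a, None = omega_1. *)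
Definition pt (W : Type) := option W.

Definition ltp {W : Type} (lt : W -> W -> bool) (p q : pt W) : bool :=
  match p, q with
  | Some a, Some b => lt a b
  | Some _, None => true
  | None, _ => false
  end.

Definition lep {W : Type} (lt : W -> W -> bool) (p q : pt W) : bool :=
  match p, q with
  | Some a, Some b => orb (lt a b) (match lt b a with true => false | false => true end)
  | _, None => true
  | None, Some _ => false
  end.

(* Basic open sets of the order topology: intervals (lo, hi), where a missing
   endpoint (None) means unbounded on that side. *)
Definition in_interval {W : Type} (lt : W -> W -> bool)
  (lo hi : option (pt W)) (q : pt W) : Prop :=
  (match lo with None => True | Some a => ltp lt a q = true end) /\
  (match hi with None => True | Some b => ltp lt q b = true end).

Definition continuous_at_pt {W : Type} (lt : W -> W -> bool) (f : pt W -> R) (p : pt W) : Prop :=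
  forall eps, 0 < eps -> exists lo hi, in_interval lt lo hi p /\
    forall q, in_interval lt lo hi q -> Rabs (f q - f p) < eps.

Definition is_cont {W : Type} (lt : W -> W -> bool) (f : pt W -> R) : Prop :=
  forall p, continuous_at_pt lt f p.

Definition sup_norm {W : Type} (f : pt W -> R) : R :=
  real (Lub_Rbar (fun r => exists k, r = Rabs (f k))).

Definition bounded_operator {W : Type} (lt : W -> W -> bool)
  (T : (pt W -> R) -> (pt W -> R)) : Prop :=
  (forall f, is_cont lt f -> is_cont lt (T f)) /\
  (forall f g a b, is_cont lt f -> is_cont lt g ->
     T (fun k => a * f k + b * g k) = (fun k => a * T f k + b * T g k)) /\
  (exists C, forall f, is_cont lt f -> sup_norm (T f) <= C * sup_norm f).

Definition Ptilde {W : Type} (lt : W -> W -> bool) (sigma : W) (f : pt W -> R) : pt W -> R :=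
  fun k => if lep lt k (Some sigma) then f k else f None.

Definition supp_in_open {W : Type} (lt : W -> W -> bool) (xi : W) (f : pt W -> R) : Prop :=
  forall k, f k <> 0 -> ltp lt (Some xi) k = true /\ ltp lt k None = true.

(* Suppose no such eps exists.  Taking eps = 1/(n+1) gives countably many
   ordinals xi_n, and a common upper bound xi of them yields a tail (xi, omega_1)
   on which T vanishes: T f = 0 whenever supp f is contained in (xi, omega_1).
   Separately, a transfinite induction on p shows that T maps the continuous
   functions constant beyond p into functions constant beyond a single countable
   ordinal: such a function is uniformly approximated by functions constant
   beyond some r < p plus multiples of the indicator of (r, p], and there are
   only countably many r < p.  For sigma beyond both bounds, T f = T (P_sigma f)
   and T f is constant beyond sigma, i.e. T = P_sigma T P_sigma.  Throughout,
   the only property of omega_1 that matters is that countably many countable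
   ordinals have a common strict upper bound. *)

From Stdlib Require Import Reals Lra Classical FunctionalExtensionality IndefiniteDescription Cantor.
From Coquelicot Require Import Coquelicot.
Open Scope R_scope.

Lemma le_0_of_lt_inv_succ x : (forall n : nat, x < / (INR n + 1)) -> x <= 0.
Proof.
  intro H. apply Rle_plus_epsilon. intros eps He.
  destruct (archimed_cor1 eps He) as [N [HN HN0]].
  apply lt_INR in HN0. simpl in HN0.
  assert (/ (INR N + 1) < / INR N) by (apply Rinv_lt_contravar; nra).
  specialize (H N). lra.
Qed.

(* [in_interval lt lo hi q] unfolds to
   [bounded_by (ltp lt) lo q /\ bounded_by (fun a q => ltp lt q a) hi q]. *)
Definition bounded_by {A : Type} (Rel : A -> A -> bool) (b : option A) (q : A) : Prop :=
  match b with None => True | Some a => Rel a q = true end.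

Lemma bounded_by_inter {A : Type} (Rel : A -> A -> bool)
  (Rtrans : forall a b c, Rel a b = true -> Rel b c = true -> Rel a c = true)
  (Rtotal : forall a b, Rel a b = true \/ a = b \/ Rel b a = true) b1 b2 p :
  bounded_by Rel b1 p -> bounded_by Rel b2 p ->
  exists b, bounded_by Rel b p /\
    forall q, bounded_by Rel b q -> bounded_by Rel b1 q /\ bounded_by Rel b2 q.
Proof.
  destruct b1 as [a1|], b2 as [a2|]; simpl; intros H1 H2.
  - destruct (Rtotal a1 a2) as [E|[E|E]];
      [exists (Some a2) | exists (Some a2) | exists (Some a1)];
      subst; simpl; split; eauto.
  - exists (Some a1). simpl. auto.
  - exists (Some a2). simpl. auto.
  - exists None. simpl. auto.
Qed.

Section Omega1.

Context {W : Type} {lt : W -> W -> bool} (HW : is_omega1 W lt).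

Lemma ltp_irrefl p : ltp lt p p = false.
Proof. destruct p; simpl; auto. apply (om_irrefl _ _ HW). Qed.

Lemma ltp_trans p q r :
  ltp lt p q = true -> ltp lt q r = true -> ltp lt p r = true.
Proof.
  destruct p, q, r; simpl; intros; try discriminate; auto.
  eapply (om_trans _ _ HW); eauto.
Qed.

Lemma ltp_total p q : ltp lt p q = true \/ p = q \/ ltp lt q p = true.
Proof.
  destruct p as [a|], q as [b|]; simpl; auto.
  destruct (om_total _ _ HW a b) as [H|[H|H]]; subst; auto.
Qed.

Lemma ltp_asym p q : ltp lt p q = true -> ltp lt q p = false.
Proof.
  intros H. destruct (ltp lt q p) eqn:E; auto.
  pose proof (ltp_trans _ _ _ H E) as Hpp. now rewrite ltp_irrefl in Hpp.
Qed.

Lemma lep_Some_ltp q y : lep lt q (Some y) = negb (ltp lt (Some y) q).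
Proof.
  destruct q as [a|]; simpl; auto.
  destruct (om_total _ _ HW a y) as [H|[H|H]].
  - pose proof (ltp_asym (Some a) (Some y) H) as E; simpl in E. now rewrite H, E.
  - subst. now rewrite (om_irrefl _ _ HW).
  - pose proof (ltp_asym (Some y) (Some a) H) as E; simpl in E. now rewrite H, E.
Qed.

Lemma ltp_wf : well_founded (fun p q => ltp lt p q = true).
Proof.
  assert (HS : forall a, Acc (fun p q => ltp lt p q = true) (Some a)).
  { intro a. induction a as [a IH] using (well_founded_ind (om_wf _ _ HW)).
    constructor. intros [b|] H; simpl in H; try discriminate. auto. }
  intros [a|]; auto. constructor. intros [b|] H; simpl in H; try discriminate. auto.
Qed.

(* If the family were unbounded, pairing the index of a witness above [s]
   with the position of [s] below that witness would inject [W] into [nat]. *)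
Lemma countable_family_bounded (I : Type) (P : I -> Prop) (F : I -> W) (g : I -> nat) :
  (forall i j, P i -> P j -> g i = g j -> i = j) ->
  exists s, forall i, P i -> lt (F i) s = true.
Proof.
  intro Hg. apply NNPP; intro Hn.
  assert (Hwit : forall s, exists i, P i /\ lt (F i) s = false).
  { intro s; apply NNPP; intro H2; apply Hn; exists s; intros i Pi.
    destruct (lt (F i) s) eqn:E; auto; exfalso; apply H2; eauto. }
  destruct (functional_choice _ Hwit) as [N HN].
  destruct (functional_choice _ (om_segments_countable _ _ HW)) as [G HG].
  apply (om_uncountable _ _ HW).
  exists (fun s => Cantor.to_nat (g (N s), if lt s (F (N s)) then S (G (F (N s)) s) else O)).
  intros x z Hxz. apply Cantor.to_nat_inj in Hxz. injection Hxz as E1 E2.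
  destruct (HN x) as [Px Lx]. destruct (HN z) as [Pz Lz].
  pose proof (Hg _ _ Px Pz E1) as E. rewrite <- E in E2, Lz.
  destruct (lt x (F (N x))) eqn:Ex, (lt z (F (N x))) eqn:Ez; try discriminate.
  - injection E2 as E2. eapply HG; eauto.
  - destruct (om_total _ _ HW x (F (N x))) as [H|[H|H]]; try congruence.
    destruct (om_total _ _ HW z (F (N x))) as [H'|[H'|H']]; try congruence.
Qed.

Lemma W_inhabited : inhabited W.
Proof.
  apply NNPP; intro Hn. apply (om_uncountable _ _ HW). exists (fun _ => O).
  intros x. exfalso. apply Hn. exact (inhabits x).
Qed.

Lemma exists_above y : exists z, lt y z = true.
Proof.
  destruct (countable_family_bounded unit (fun _ => True) (fun _ => y) (fun _ => O))
    as [z Hz].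
  - intros [] [] _ _ _. reflexivity.
  - exists z. exact (Hz tt I).
Qed.

Lemma exists_successor y :
  exists z, lt y z = true /\ forall w, lt w z = true -> lt y w = false.
Proof.
  destruct (exists_above y) as [z0 Hz0].
  revert Hz0. induction z0 as [z IH] using (well_founded_ind (om_wf _ _ HW)). intro Hz.
  destruct (classic (exists w, lt w z = true /\ lt y w = true)) as [[w [H1 H2]]|Hn].
  - eapply IH; eauto.
  - exists z. split; auto. intros w Hw. destruct (lt y w) eqn:E; auto. exfalso; eauto.
Qed.

Definition eventually_ord (Q : W -> Prop) : Prop :=
  exists s, forall t, lt s t = true -> Q t.

Lemma eventually_ord_forall (Q : W -> Prop) : (forall t, Q t) -> eventually_ord Q.
Proof. intro H. destruct W_inhabited as [w]. exists w. auto. Qed.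

Lemma eventually_ord_mono (Q1 Q2 : W -> Prop) :
  (forall t, Q1 t -> Q2 t) -> eventually_ord Q1 -> eventually_ord Q2.
Proof. intros H [s Hs]. exists s. auto. Qed.

Lemma eventually_ord_witness (Q : W -> Prop) : eventually_ord Q -> exists t, Q t.
Proof. intros [s Hs]. destruct (exists_above s) as [t Ht]. eauto. Qed.

Lemma eventually_ord_and (Q1 Q2 : W -> Prop) :
  eventually_ord Q1 -> eventually_ord Q2 -> eventually_ord (fun t => Q1 t /\ Q2 t).
Proof.
  intros [s1 H1] [s2 H2]. pose proof (om_trans _ _ HW) as Htrans.
  destruct (om_total _ _ HW s1 s2) as [E|[E|E]]; [exists s2 | exists s2 | exists s1];
    subst; intros t Ht; split; eauto.
Qed.

Lemma eventually_ord_countable (I : Type) (P : I -> Prop) (Q : I -> W -> Prop)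
  (g : I -> nat) :
  (forall i j, P i -> P j -> g i = g j -> i = j) ->
  (forall i, P i -> eventually_ord (Q i)) ->
  eventually_ord (fun t => forall i, P i -> Q i t).
Proof.
  intros Hg HQ. destruct W_inhabited as [w].
  assert (Hs : forall i, exists s, P i -> forall t, lt s t = true -> Q i t).
  { intro i. destruct (classic (P i)) as [Pi|Pi].
    - destruct (HQ i Pi) as [s Hs]. eauto.
    - exists w. contradiction. }
  destruct (functional_choice _ Hs) as [S HS].
  destruct (countable_family_bounded I P S g Hg) as [s Hbound].
  exists s. intros t Hst i Pi. apply (HS i Pi). eapply (om_trans _ _ HW); eauto.
Qed.

Lemma eventually_ord_forall_nat (Q : nat -> W -> Prop) :
  (forall n, eventually_ord (Q n)) -> eventually_ord (fun t => forall n, Q n t).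
Proof.
  intro HQ.
  apply (eventually_ord_mono (fun t => forall n, True -> Q n t)); [auto|].
  apply (eventually_ord_countable nat (fun _ => True) Q (fun n => n)); auto.
Qed.

Definition nbhd (p : pt W) (P : pt W -> Prop) : Prop :=
  exists lo hi, in_interval lt lo hi p /\ forall q, in_interval lt lo hi q -> P q.

Lemma nbhd_mono p (P Q : pt W -> Prop) :
  (forall q, P q -> Q q) -> nbhd p P -> nbhd p Q.
Proof. intros H [lo [hi [Hp HP]]]. exists lo, hi. auto. Qed.

Lemma nbhd_and p (P Q : pt W -> Prop) :
  nbhd p P -> nbhd p Q -> nbhd p (fun q => P q /\ Q q).
Proof.
  intros [lo1 [hi1 [[L1 U1] H1]]] [lo2 [hi2 [[L2 U2] H2]]].
  destruct (bounded_by_inter (ltp lt) ltp_trans ltp_total lo1 lo2 p L1 L2)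
    as [lo [L Hlo]].
  assert (Hflip_total : forall a b, ltp lt b a = true \/ a = b \/ ltp lt a b = true)
    by (intros a b; destruct (ltp_total a b) as [H|[H|H]]; auto).
  destruct (bounded_by_inter (fun a q => ltp lt q a)
              (fun a b c Hab Hbc => ltp_trans c b a Hbc Hab)
              Hflip_total hi1 hi2 p U1 U2) as [hi [U Hhi]].
  exists lo, hi. split; [split; assumption|].
  intros q [Lq Uq]. destruct (Hlo q Lq), (Hhi q Uq).
  split; [apply H1 | apply H2]; split; assumption.
Qed.

Lemma cont_const c : is_cont lt (fun _ : pt W => c).
Proof.
  intros p eps He. exists None, None. split; [split; exact I|].
  intros. rewrite Rminus_diag, Rabs_R0. exact He.
Qed.

Lemma cont_lin f g a b :
  is_cont lt f -> is_cont lt g -> is_cont lt (fun k => a * f k + b * g k).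
Proof.
  intros Hf Hg p eps He.
  set (e := eps / (Rabs a + Rabs b + 1)).
  pose proof (Rabs_pos a). pose proof (Rabs_pos b).
  assert (He' : 0 < e) by (apply Rdiv_lt_0_compat; lra).
  assert (Heq : e * (Rabs a + Rabs b + 1) = eps) by (unfold e; field; lra).
  apply (nbhd_mono _ (fun q => Rabs (f q - f p) < e /\ Rabs (g q - g p) < e)).
  - intros q [H1 H2].
    replace (a * f q + b * g q - (a * f p + b * g p))
      with (a * (f q - f p) + b * (g q - g p)) by ring.
    eapply Rle_lt_trans; [apply Rabs_triang|]. rewrite !Rabs_mult.
    assert (Rabs a * Rabs (f q - f p) <= Rabs a * e) by (apply Rmult_le_compat_l; lra).
    assert (Rabs b * Rabs (g q - g p) <= Rabs b * e) by (apply Rmult_le_compat_l; lra).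
    nra.
  - apply nbhd_and; [apply Hf | apply Hg]; exact He'.
Qed.

Lemma cont_add_scale f g c :
  is_cont lt f -> is_cont lt g -> is_cont lt (fun k => f k + c * g k).
Proof.
  intros Hf Hg. replace (fun k => f k + c * g k) with (fun k => 1 * f k + c * g k).
  - apply cont_lin; assumption.
  - apply functional_extensionality. intro k. ring.
Qed.

Lemma cont_sub f g : is_cont lt f -> is_cont lt g -> is_cont lt (fun k => f k - g k).
Proof.
  intros Hf Hg. replace (fun k => f k - g k) with (fun k => f k + -1 * g k).
  - apply cont_add_scale; assumption.
  - apply functional_extensionality. intro k. ring.
Qed.

Lemma cont_scale f c : is_cont lt f -> is_cont lt (fun k => c * f k).
Proof.
  intro Hf. replace (fun k => c * f k) with (fun k => 0 + c * f k).
  - apply cont_add_scale; [apply cont_const | assumption].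
  - apply functional_extensionality. intro k. ring.
Qed.

Definition locally_const (b : pt W -> bool) : Prop :=
  forall p, nbhd p (fun q => b q = b p).

Lemma cont_if b u v :
  locally_const b -> is_cont lt u -> is_cont lt v ->
  is_cont lt (fun q => if b q then u q else v q).
Proof.
  intros Hb Hu Hv p eps He.
  change (nbhd p (fun q =>
    Rabs ((if b q then u q else v q) - (if b p then u p else v p)) < eps)).
  destruct (b p) eqn:Ep.
  - apply (nbhd_mono _ (fun q => b q = b p /\ Rabs (u q - u p) < eps)).
    + intros q [Hq H]. rewrite Hq, Ep. exact H.
    + apply nbhd_and; [apply Hb | apply Hu, He].
  - apply (nbhd_mono _ (fun q => b q = b p /\ Rabs (v q - v p) < eps)).
    + intros q [Hq H]. rewrite Hq, Ep. exact H.
    + apply nbhd_and; [apply Hb | apply Hv, He].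
Qed.

(* [r = None] stands for a point below the whole space: everything is beyond it. *)
Definition beyond (r : option W) (q : pt W) : bool :=
  match r with None => true | Some y => ltp lt (Some y) q end.

Lemma beyond_locally_const r : locally_const (beyond r).
Proof.
  intro p. destruct r as [y|].
  2:{ exists None, None. split; [split; exact I | reflexivity]. }
  simpl. destruct (ltp lt (Some y) p) eqn:E.
  - exists (Some (Some y)), None. split; [split; simpl; auto|].
    intros q [A _]. simpl in A. now rewrite A.
  - destruct (exists_successor y) as [z [Hz1 Hz2]].
    exists None, (Some (Some z)). split; [split; [exact I|]|].
    + destruct p as [a|]; simpl in *; try discriminate.
      destruct (om_total _ _ HW a y) as [H|[H|H]]; subst; auto;
        [eapply (om_trans _ _ HW); eauto | congruence].
    + intros q [_ B]. destruct q as [c|]; simpl in *; try discriminate.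
      now rewrite (Hz2 c B).
Qed.

(* [Ptilde] with the cut point [r] allowed to be [None] (see [Ptilde_flatten]). *)
Definition flatten_beyond (r : option W) (h : pt W -> R) : pt W -> R :=
  fun q => if beyond r q then h None else h q.

Definition step_indicator (r : option W) (p : W) : pt W -> R :=
  fun q => if beyond (Some p) q then 0 else if beyond r q then 1 else 0.

Lemma cont_flatten_beyond r h : is_cont lt h -> is_cont lt (flatten_beyond r h).
Proof.
  intro Hh. apply cont_if; [apply beyond_locally_const | apply cont_const | exact Hh].
Qed.

Lemma cont_step_indicator r p : is_cont lt (step_indicator r p).
Proof.
  apply cont_if; [apply beyond_locally_const | apply cont_const |].
  apply cont_if; [apply beyond_locally_const | apply cont_const | apply cont_const].
Qed.

(* Compactness of [0, omega_1], by well-founded induction: [f] is bounded on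
   every initial segment [0, p]. *)
Lemma cont_bounded f : is_cont lt f -> exists B, forall k, Rabs (f k) <= B.
Proof.
  intro Hf.
  assert (Hseg : forall p, exists B, forall q, ltp lt p q = false -> Rabs (f q) <= B).
  { intro p. induction p as [p IH] using (well_founded_ind ltp_wf).
    destruct (Hf p 1 Rlt_0_1) as [lo [hi [[Ilo Ihi] H]]].
    assert (Hq : forall q, ltp lt p q = false ->
                   match hi with None => True | Some b => ltp lt q b = true end).
    { intros q Hq. destruct hi as [b|]; auto.
      destruct (ltp_total p q) as [X|[X|X]]; try congruence. eapply ltp_trans; eauto. }
    destruct lo as [a|].
    - destruct (IH a Ilo) as [Ba HBa]. exists (Rabs Ba + Rabs (f p) + 1). intros q Hpq.
      pose proof (Rabs_pos Ba). pose proof (Rle_abs Ba). pose proof (Rabs_pos (f p)).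
      destruct (ltp lt a q) eqn:Eaq.
      + assert (Rabs (f q - f p) < 1) by (apply H; split; auto; apply Hq; auto).
        pose proof (Rabs_triang_inv (f q) (f p)). lra.
      + specialize (HBa q Eaq). lra.
    - exists (Rabs (f p) + 1). intros q Hpq.
      assert (Rabs (f q - f p) < 1) by (apply H; split; [exact I|apply Hq; auto]).
      pose proof (Rabs_triang_inv (f q) (f p)). lra. }
  destruct (Hseg None) as [B HB]. exists B. intro k. apply HB. reflexivity.
Qed.

Lemma sup_norm_le (u : pt W -> R) c : (forall k, Rabs (u k) <= c) -> sup_norm u <= c.
Proof.
  intro H. unfold sup_norm.
  destruct (Lub_Rbar_correct (fun r => exists k, r = Rabs (u k))) as [Hub Hl].
  assert (H1 : Rbar_le (Lub_Rbar (fun r => exists k, r = Rabs (u k))) c).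
  { apply Hl. intros x [k ->]. simpl. auto. }
  assert (H2 : Rbar_le (Rabs (u None)) (Lub_Rbar (fun r => exists k, r = Rabs (u k)))).
  { apply Hub. eauto. }
  destruct (Lub_Rbar _); simpl in *; try contradiction; auto.
Qed.

Lemma Rabs_le_sup_norm u k : is_cont lt u -> Rabs (u k) <= sup_norm u.
Proof.
  intro Hu. destruct (cont_bounded u Hu) as [B HB]. unfold sup_norm.
  destruct (Lub_Rbar_correct (fun r => exists k, r = Rabs (u k))) as [Hub Hl].
  assert (H1 : Rbar_le (Lub_Rbar (fun r => exists k, r = Rabs (u k))) B).
  { apply Hl. intros x [k' ->]. simpl. auto. }
  assert (H2 : Rbar_le (Rabs (u k)) (Lub_Rbar (fun r => exists k, r = Rabs (u k)))).
  { apply Hub. eauto. }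
  destruct (Lub_Rbar _); simpl in *; try contradiction; auto.
Qed.

Lemma sup_norm_nonneg u : is_cont lt u -> 0 <= sup_norm u.
Proof. intro Hu. eapply Rle_trans; [apply Rabs_pos | apply (Rabs_le_sup_norm u None Hu)]. Qed.

Definition const_beyond (r : option W) (u : pt W -> R) : Prop :=
  forall q, beyond r q = true -> u q = u None.

Lemma cont_eventually_const u :
  is_cont lt u -> eventually_ord (fun s => const_beyond (Some s) u).
Proof.
  intro Hu.
  assert (Hn : forall n : nat, eventually_ord (fun s =>
            forall q, beyond (Some s) q = true -> Rabs (u q - u None) < / (INR n + 1))).
  { intro n. assert (Hpos : 0 < / (INR n + 1)).
    { apply Rinv_0_lt_compat. pose proof (pos_INR n). lra. }
    destruct (Hu None _ Hpos) as [lo [hi [[Ilo Ihi] Hl]]].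
    assert (Hhi : hi = None) by (destruct hi as [[b|]|]; simpl in Ihi; easy).
    subst hi. destruct lo as [[a|]|]; simpl in Ilo; try discriminate.
    - exists a. intros t Hat q Hq. apply Hl. split; [|exact I].
      exact (ltp_trans (Some a) (Some t) q Hat Hq).
    - apply eventually_ord_forall. intros t q _. apply Hl. split; exact I. }
  eapply eventually_ord_mono; [|exact (eventually_ord_forall_nat _ Hn)].
  intros t Ht q Hq.
  apply Rminus_diag_uniq, Rabs_eq_0, Rle_antisym; [|apply Rabs_pos].
  apply le_0_of_lt_inv_succ. intro n. exact (Ht n q Hq).
Qed.

Definition below (p : W) (r : option W) : Prop :=
  match r with None => True | Some y => lt y p = true end.

Lemma below_countable p :
  exists g : option W -> nat, forall r r', below p r -> below p r' -> g r = g r' -> r = r'.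
Proof.
  destruct (om_segments_countable _ _ HW p) as [g Hg].
  exists (fun r => match r with None => O | Some y => S (g y) end).
  intros [y|] [y'|]; simpl; intros Hy Hy' E; try discriminate; auto.
  injection E as E. f_equal. exact (Hg y y' Hy Hy' E).
Qed.

Lemma beyond_of_below p r q : below p r -> beyond (Some p) q = true -> beyond r q = true.
Proof.
  destruct r as [y|]; simpl; auto. intros Hy Hq. exact (ltp_trans (Some y) (Some p) q Hy Hq).
Qed.

(* A continuous function that is constant beyond [p] is uniformly approximated by
   one that is constant beyond some [r] below [p], plus a multiple of the
   indicator of (r, p]: continuity at [p] supplies [r]. *)
Lemma step_approx h p eps :
  is_cont lt h -> const_beyond (Some p) h -> 0 < eps ->
  exists r, below p r /\ forall k,
    Rabs (h k - (flatten_beyond r h k + (h (Some p) - h None) * step_indicator r p k)) <= eps.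
Proof.
  intros Hh Hc He.
  destruct (Hh (Some p) eps He) as [lo [hi [[Ilo Ihi] Hl]]].
  assert (Hr : exists r, below p r /\ forall q, beyond r q = true -> bounded_by (ltp lt) lo q).
  { destruct lo as [[a|]|]; simpl in Ilo; try discriminate.
    - exists (Some a). split; [exact Ilo | intros q Hq; exact Hq].
    - exists None. split; intros; exact I. }
  destruct Hr as [r [Hr Hlo]]. exists r. split; [exact Hr|]. intro k.
  unfold flatten_beyond, step_indicator.
  destruct (beyond (Some p) k) eqn:Ep.
  - rewrite (beyond_of_below p r k Hr Ep), (Hc k Ep).
    replace (h None - (h None + (h (Some p) - h None) * 0)) with 0 by ring.
    rewrite Rabs_R0. lra.
  - destruct (beyond r k) eqn:Er.
    + replace (h k - (h None + (h (Some p) - h None) * 1)) with (h k - h (Some p)) by ring.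
      apply Rlt_le, Hl. split; [exact (Hlo k Er)|].
      destruct hi as [b|]; [|exact I]. change (ltp lt k b = true).
      change (ltp lt (Some p) k = false) in Ep.
      destruct (ltp_total k (Some p)) as [X|[X|X]]; [| subst; exact Ihi | congruence].
      exact (ltp_trans _ _ _ X Ihi).
    + replace (h k - (h k + (h (Some p) - h None) * 0)) with 0 by ring.
      rewrite Rabs_R0. lra.
Qed.

Lemma const_beyond_flatten r h : const_beyond r (flatten_beyond r h).
Proof.
  intros q Hq. unfold flatten_beyond. rewrite Hq.
  destruct r; reflexivity.
Qed.

Lemma flatten_beyond_of_const r u : const_beyond r u -> flatten_beyond r u = u.
Proof.
  intro Hu. apply functional_extensionality. intro q. unfold flatten_beyond.
  destruct (beyond r q) eqn:E; [symmetry; exact (Hu q E) | reflexivity].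
Qed.

Lemma Ptilde_flatten s f : Ptilde lt s f = flatten_beyond (Some s) f.
Proof.
  apply functional_extensionality. intro k. unfold Ptilde, flatten_beyond.
  change (beyond (Some s) k) with (ltp lt (Some s) k). rewrite lep_Some_ltp.
  destruct (ltp lt (Some s) k); reflexivity.
Qed.

Lemma supp_in_open_mono s t f :
  lt s t = true -> supp_in_open lt t f -> supp_in_open lt s f.
Proof.
  intros Hst Ht k Hk. destruct (Ht k Hk) as [H1 H2]. split; [|exact H2].
  exact (ltp_trans (Some s) (Some t) k Hst H1).
Qed.

Lemma supp_sub_flatten s f :
  supp_in_open lt s (fun k => f k - flatten_beyond (Some s) f k).
Proof.
  intros k Hk. unfold flatten_beyond in Hk.
  change (beyond (Some s) k) with (ltp lt (Some s) k) in Hk.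
  destruct (ltp lt (Some s) k); [|exfalso; apply Hk; ring].
  destruct k as [a|]; [split; reflexivity | exfalso; apply Hk; ring].
Qed.

Section Operator.

Variable T : (pt W -> R) -> (pt W -> R).
Hypothesis HT : bounded_operator lt T.

Lemma T_cont f : is_cont lt f -> is_cont lt (T f).
Proof. exact (proj1 HT f). Qed.

Lemma T_add_scale f g c : is_cont lt f -> is_cont lt g ->
  T (fun k => f k + c * g k) = fun k => T f k + c * T g k.
Proof.
  intros Hf Hg. destruct HT as [_ [Tlin _]].
  replace (fun k => f k + c * g k) with (fun k => 1 * f k + c * g k).
  - rewrite Tlin by assumption. apply functional_extensionality. intro k. ring.
  - apply functional_extensionality. intro k. ring.
Qed.

Lemma T_sub f g : is_cont lt f -> is_cont lt g ->
  T (fun k => f k - g k) = fun k => T f k - T g k.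
Proof.
  intros Hf Hg. replace (fun k => f k - g k) with (fun k => f k + -1 * g k).
  - rewrite T_add_scale by assumption. apply functional_extensionality. intro k. ring.
  - apply functional_extensionality. intro k. ring.
Qed.

Lemma T_scale f c : is_cont lt f -> T (fun k => c * f k) = fun k => c * T f k.
Proof.
  intro Hf. destruct HT as [_ [Tlin _]].
  replace (fun k => c * f k) with (fun k => c * f k + 0 * f k).
  - rewrite Tlin by assumption. apply functional_extensionality. intro k. ring.
  - apply functional_extensionality. intro k. ring.
Qed.

Lemma T_const_of_approx h q : is_cont lt h ->
  (forall eps, 0 < eps -> exists g, is_cont lt g /\
     (forall k, Rabs (h k - g k) <= eps) /\ T g q = T g None) ->
  T h q = T h None.
Proof.
  intros Hh Happ. destruct HT as [_ [_ [C HC]]].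
  apply Rminus_diag_uniq, Rabs_eq_0, Rle_antisym; [|apply Rabs_pos].
  apply Rle_plus_epsilon. intros eps He.
  pose proof (Rabs_pos C). pose proof (Rle_abs C).
  set (e := eps / (2 * Rabs C + 1)).
  assert (He' : 0 < e) by (apply Rdiv_lt_0_compat; lra).
  assert (Heq : e * (2 * Rabs C + 1) = eps) by (unfold e; field; lra).
  destruct (Happ e He') as [g [Hg [Hd HTg]]].
  assert (Hdc : is_cont lt (fun k => h k - g k)) by (apply cont_sub; assumption).
  assert (Hnorm : sup_norm (T (fun k => h k - g k)) <= Rabs C * e).
  { eapply Rle_trans; [apply HC, Hdc|].
    pose proof (sup_norm_le _ e Hd). pose proof (sup_norm_nonneg _ Hdc). nra. }
  pose proof (Rabs_le_sup_norm _ q (T_cont _ Hdc)) as Hq.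
  pose proof (Rabs_le_sup_norm _ None (T_cont _ Hdc)) as HNone.
  rewrite T_sub in Hq, HNone, Hnorm by assumption.
  replace (T h q - T h None) with ((T h q - T g q) - (T h None - T g None)) by (rewrite HTg; ring).
  eapply Rle_trans; [apply Rabs_triang|]. rewrite Rabs_Ropp. nra.
Qed.

Definition image_const_beyond (r : option W) (t : W) : Prop :=
  forall h, is_cont lt h -> const_beyond r h -> const_beyond (Some t) (T h).

Lemma image_const_None : eventually_ord (image_const_beyond None).
Proof.
  apply (eventually_ord_mono (fun t => const_beyond (Some t) (T (fun _ => 1)))).
  - intros t Ht h Hh Hc q Hq.
    replace h with (fun k => h None * (fun _ : pt W => 1) k)
      by (apply functional_extensionality; intro k; rewrite (Hc k eq_refl); ring).
    rewrite T_scale by apply cont_const. now rewrite (Ht q Hq).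
  - apply cont_eventually_const, T_cont, cont_const.
Qed.

(* Transfinite step: only countably many [r] below [p] are involved, so one
   [t] works for all of them at once. *)
Lemma image_const_step p :
  (forall y, lt y p = true -> eventually_ord (image_const_beyond (Some y))) ->
  eventually_ord (image_const_beyond (Some p)).
Proof.
  intro IH.
  assert (Hunif : eventually_ord (fun t => forall r, below p r ->
      image_const_beyond r t /\ const_beyond (Some t) (T (step_indicator r p)))).
  { destruct (below_countable p) as [g Hg].
    apply (eventually_ord_countable _ _ _ g Hg). intros r Hr.
    apply eventually_ord_and.
    - destruct r as [y|]; [exact (IH y Hr) | exact image_const_None].
    - apply cont_eventually_const, T_cont, cont_step_indicator. }
  eapply eventually_ord_mono; [|exact Hunif].
  intros t Ht h Hh Hc q Hq.
  apply T_const_of_approx; [exact Hh|]. intros eps He.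
  destruct (step_approx h p eps Hh Hc He) as [r [Hr Happrox]].
  destruct (Ht r Hr) as [Hflat Hind].
  assert (Hfc : is_cont lt (flatten_beyond r h)) by (apply cont_flatten_beyond, Hh).
  exists (fun k => flatten_beyond r h k + (h (Some p) - h None) * step_indicator r p k).
  split; [|split; [exact Happrox|]].
  - apply cont_add_scale; [exact Hfc | apply cont_step_indicator].
  - rewrite T_add_scale by (exact Hfc || apply cont_step_indicator).
    now rewrite (Hflat _ Hfc (const_beyond_flatten r h) q Hq), (Hind q Hq).
Qed.

Lemma eventually_image_const p : eventually_ord (image_const_beyond (Some p)).
Proof.
  induction p as [p IH] using (well_founded_ind (om_wf _ _ HW)).
  exact (image_const_step p IH).
Qed.

Definition kills_tail (xi : W) : Prop :=
  forall f, is_cont lt f -> supp_in_open lt xi f -> forall k, T f k = 0.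

Lemma T_flatten_of_kills s f :
  kills_tail s -> is_cont lt f -> T f = T (flatten_beyond (Some s) f).
Proof.
  intros Hs Hf.
  assert (Hfc : is_cont lt (flatten_beyond (Some s) f)) by (apply cont_flatten_beyond, Hf).
  pose proof (Hs _ (cont_sub _ _ Hf Hfc) (supp_sub_flatten s f)) as H0.
  rewrite T_sub in H0 by assumption.
  apply functional_extensionality. intro k. specialize (H0 k). lra.
Qed.

Lemma T_eq_Ptilde_conj xi sigma :
  kills_tail xi -> kills_tail sigma -> image_const_beyond (Some xi) sigma ->
  forall f, is_cont lt f -> T f = Ptilde lt sigma (T (Ptilde lt sigma f)).
Proof.
  intros Hxi Hsig Himg f Hf. rewrite !Ptilde_flatten.
  rewrite <- (T_flatten_of_kills sigma f Hsig Hf).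
  symmetry. apply flatten_beyond_of_const.
  rewrite (T_flatten_of_kills xi f Hxi Hf).
  apply Himg; [apply cont_flatten_beyond, Hf | apply const_beyond_flatten].
Qed.

Lemma kills_tail_of_unit_ball t :
  (forall f, is_cont lt f -> supp_in_open lt t f -> sup_norm f <= 1 ->
     sup_norm (T f) <= 0) ->
  kills_tail t.
Proof.
  intros Hball f Hf Hs k.
  set (M := sup_norm f + 1). pose proof (sup_norm_nonneg f Hf).
  assert (HM : 0 < M) by (unfold M; lra).
  assert (HfM : sup_norm f < M) by (unfold M; lra).
  set (f' := fun k => / M * f k).
  assert (Hf' : is_cont lt f') by (apply cont_scale, Hf).
  assert (Hs' : supp_in_open lt t f').
  { intros j Hj. apply Hs. intro E. apply Hj. unfold f'. rewrite E. ring. }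
  assert (Hn' : sup_norm f' <= 1).
  { apply sup_norm_le. intro j. unfold f'.
    rewrite Rabs_mult, Rabs_inv, (Rabs_pos_eq M) by lra.
    pose proof (Rabs_le_sup_norm f j Hf).
    apply (Rmult_le_reg_l M); [lra|]. rewrite <- Rmult_assoc, Rinv_r by lra. lra. }
  assert (Hk : Rabs (T f' k) <= 0).
  { pose proof (Rabs_le_sup_norm (T f') k (T_cont f' Hf')).
    pose proof (Hball f' Hf' Hs' Hn'). lra. }
  unfold f' in Hk. rewrite T_scale in Hk by exact Hf.
  rewrite Rabs_mult, Rabs_inv, (Rabs_pos_eq M) in Hk by lra.
  assert (HTf : Rabs (T f k) <= 0).
  { apply (Rmult_le_reg_l (/ M)); [apply Rinv_0_lt_compat, HM | lra]. }
  apply Rabs_eq_0, Rle_antisym; [exact HTf | apply Rabs_pos].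
Qed.

Lemma eventually_kills_tail :
  (forall eps, 0 < eps -> exists xi, forall f, is_cont lt f ->
     supp_in_open lt xi f -> sup_norm f <= 1 -> sup_norm (T f) < eps) ->
  eventually_ord kills_tail.
Proof.
  intro Hsmall.
  assert (Hn : forall n : nat, eventually_ord (fun t => forall f, is_cont lt f ->
     supp_in_open lt t f -> sup_norm f <= 1 -> sup_norm (T f) < / (INR n + 1))).
  { intro n. destruct (Hsmall (/ (INR n + 1))) as [xi Hxi].
    { apply Rinv_0_lt_compat. pose proof (pos_INR n). lra. }
    exists xi. intros t Ht f Hf Hs. apply (Hxi f Hf). exact (supp_in_open_mono xi t f Ht Hs). }
  eapply eventually_ord_mono; [|exact (eventually_ord_forall_nat _ Hn)].
  intros t Ht. apply kills_tail_of_unit_ball. intros f Hf Hs Hn1.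
  apply le_0_of_lt_inv_succ. intro n. exact (Ht n f Hf Hs Hn1).
Qed.

End Operator.

End Omega1.

Theorem lemma4p3 (W : Type) (lt : W -> W -> bool) (HW : is_omega1 W lt)
  (T : (pt W -> R) -> (pt W -> R)) (HT : bounded_operator lt T)
  (Hne : forall sigma : W, exists f, is_cont lt f /\
           T f <> Ptilde lt sigma (T (Ptilde lt sigma f))) :
  exists eps, 0 < eps /\
    forall xi : W, exists f, is_cont lt f /\ supp_in_open lt xi f /\
      sup_norm f <= 1 /\ sup_norm (T f) >= eps.
Proof.
  apply NNPP; intro Hnot.
  assert (Hsmall : forall eps, 0 < eps -> exists xi, forall f, is_cont lt f ->
            supp_in_open lt xi f -> sup_norm f <= 1 -> sup_norm (T f) < eps).
  { intros eps He. apply NNPP; intro Hbig. apply Hnot. exists eps. split; [exact He|].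
    intro xi. apply NNPP; intro Hno. apply Hbig. exists xi. intros f Hf Hs Hn.
    apply Rnot_le_lt. intro Hge. apply Hno.
    exists f. split; [exact Hf | split; [exact Hs | split; [exact Hn | lra]]]. }
  pose proof (eventually_kills_tail HW T HT Hsmall) as Hkill.
  destruct (eventually_ord_witness HW _ Hkill) as [xi Hxi].
  destruct (eventually_ord_witness HW _
              (eventually_ord_and HW _ _ Hkill (eventually_image_const HW T HT xi)))
    as [sigma [Hsig Himg]].
  destruct (Hne sigma) as [f [Hf Hneq]].
  exact (Hneq (T_eq_Ptilde_conj HW T HT xi sigma Hxi Hsig Himg f Hf)).
Qed.
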